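(* Let $F$ be a field and let $f=\sum_{\sigma\in S_d}\lambda_\sigma x_{\sigma(1)}\cdots x_{\sigma(d)}\in F\langle X\rangle$ be a multilinear polynomial of degree $d\ge 2$ such that $\sum_{\sigma\in S_d}\lambda_\sigma=0$ and $\sum_{\sigma\in S_d,\ \sigma^{-1}(1)<\sigma^{-1}(2)}\lambda_\sigma\neq 0$. Let $\mathcal A$ be a unital $F$-algebra and let $\phi:\mathcal A\to\mathcal A$ be a linear map that preserves zeros of $f$ and satisfies $\phi(1)\in F^*\cdot 1$. If $a,b\in\mathcal A$ satisfy $ab=ba=0$, then $\phi(a)\phi(b)=\phi(b)\phi(a)$.
   Context: $F\langle X\rangle$ is the free algebra over $F$ in noncommuting indeterminates $x_1,x_2,\ldots$. A map $\phi$ on an $F$-algebra $\mathcal A$ preserves zeros of $f$ if for all $a_1,\ldots,a_d\in\mathcal A$, $f(a_1,\ldots,a_d)=0$ implies $f(\phi(a_1),\ldots,\phi(a_d))=0$. *)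

From HB Require Import structures.
From mathcomp Require Import all_boot all_order all_algebra all_fingroup.
Set Implicit Arguments. Unset Strict Implicit. Unset Printing Implicit Defensive.
Import GRing.Theory.
Local Open Scope ring_scope.

(* Evaluation of the multilinear polynomial
   f = sum_{s in S_d} lam_s x_{s(1)} ... x_{s(d)}  at (a_1,...,a_d).
   Indices are 0-based: x_{s(i)} for i = 0..d-1, product taken in increasing i. *)
Definition mlin_eval (F : fieldType) (A : algType F) (d : nat)
  (lam : 'S_d -> F) (a : 'I_d -> A) : A :=
  \sum_(s : 'S_d) lam s *: \prod_(i < d) a (s i).

Definition preserves_zeros (F : fieldType) (A : algType F) (d : nat)
  (lam : 'S_d -> F) (phi : A -> A) : Prop :=
  forall a : 'I_d -> A, mlin_eval lam a = 0 -> mlin_eval lam (fun i => phi (a i)) = 0.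

From HB Require Import structures.
From mathcomp Require Import all_boot all_order all_algebra all_fingroup.
Set Implicit Arguments. Unset Strict Implicit. Unset Printing Implicit Defensive.
Import GRing.Theory.
Local Open Scope ring_scope.

(* Evaluate f at the point (a, b, 1, ..., 1):
   in the monomial of a permutation s every factor is 1 except a and b,
   so it equals ab when a comes before b (s^-1(0) < s^-1(1)) and ba
   otherwise.  Hence f(a, b, 1, ..., 1) = alpha ab + beta ba = 0, where
   alpha is the sum of lam over the "order keeping" permutations and beta
   over the others.  Since phi is linear and phi(1) = c 1, applying phi
   entrywise gives the point (phi a, phi b, c, ..., c), where
   f = c^(d-2) (alpha phi(a)phi(b) + beta phi(b)phi(a)); it vanishes since
   phi preserves zeros of f.  From alpha + beta = 0, alpha != 0, c != 0 we
   get phi(a)phi(b) = phi(b)phi(a). *)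

Definition is_pin (p q i : nat) : bool := (i == p) || (i == q).

Lemma filter_pins p q m : (p < q < m)%N ->
  [seq i <- index_iota 0 m | is_pin p q i] = [:: p; q].
Proof.
case/andP=> lt_pq lt_qm; rewrite /index_iota subn0.
apply: (irr_sorted_eq ltn_trans ltnn).
- exact: (sorted_filter ltn_trans _ (iota_ltn_sorted 0 m)).
- by rewrite /= lt_pq.
move=> i; rewrite mem_filter mem_iota add0n !inE /is_pin.
by case: eqP => [->|_]; case: eqP => [->|_] //=; rewrite (ltn_trans lt_pq).
Qed.

Lemma prod_pin_scalars (R : pzSemiRingType) (c : R) p q m : (p < q < m)%N ->
  \prod_(0 <= i < m) (if is_pin p q i then 1 else c) = c ^+ (m - 2).
Proof.
move=> pqm.
have -> : \prod_(0 <= i < m) (if is_pin p q i then 1 else c) =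
          \prod_(0 <= i < m | ~~ is_pin p q i) c.
  by rewrite [RHS]big_mkcond; apply: eq_bigr => i _; case: is_pin.
rewrite big_const_seq iter_mulr_1; congr (_ ^+ _).
have {2}<- : size (index_iota 0 m) = m by rewrite size_iota subn0.
by rewrite -(count_predC (is_pin p q)) -[count (is_pin _ _) _]size_filter
  filter_pins // addKn.
Qed.

(* [keeps_order s]: in the monomial of s, the variable x_0 precedes x_1. *)
Definition keeps_order n (s : 'S_n.+2) : bool :=
  ((s^-1)%g (ord0 : 'I_n.+2) < (s^-1)%g (inord 1 : 'I_n.+2))%N.

Section PinnedProducts.
Variables (R : pzRingType) (A : algType R).
Implicit Types (x y : A) (c : R) (p q m : nat).

Definition pinned x y c p q (i : nat) : A :=
  if i == p then x else if i == q then y else c%:A.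

Lemma pinned_swap x y c p q : p != q -> pinned x y c p q =1 pinned y x c q p.
Proof.
by move=> ne_pq i; rewrite /pinned; case: eqP => [->|//]; rewrite (negbTE ne_pq).
Qed.

Lemma prod_pinned1 x y p q m : (p < q < m)%N ->
  \prod_(0 <= i < m) pinned x y 1 p q i = x * y.
Proof.
move=> pqm; have ne_qp : q != p by case/andP: pqm => /gtn_eqF ->.
have -> : \prod_(0 <= i < m) pinned x y 1 p q i =
          \prod_(0 <= i < m | is_pin p q i) pinned x y 1 p q i.
  rewrite [RHS]big_mkcond; apply: eq_bigr => i _ /=.
  by rewrite /pinned /is_pin scale1r; case: (i == p); case: (i == q).
rewrite -big_filter filter_pins // big_cons big_seq1.
by rewrite /pinned eqxx (negbTE ne_qp) eqxx.
Qed.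

Lemma prod_pinned x y c p q m : (p < q < m)%N ->
  \prod_(0 <= i < m) pinned x y c p q i = c ^+ (m - 2) *: (x * y).
Proof.
move=> pqm.
rewrite -(prod_pinned1 x y pqm) -(prod_pin_scalars c pqm) -scaler_prod.
apply: eq_bigr => i _; rewrite /pinned /is_pin.
by case: (i == p); case: (i == q); rewrite ?scale1r ?scaler1.
Qed.

Lemma prod_perm_pinned x y c n (s : 'S_n.+2) :
  \prod_(i < n.+2) pinned x y c 0 1 (s i) =
  c ^+ n *: (if keeps_order s then x * y else y * x).
Proof.
set p := (s^-1)%g (ord0 : 'I_n.+2); set q := (s^-1)%g (inord 1 : 'I_n.+2).
have perm_at (i j : 'I_n.+2) k :
    nat_of_ord j = k -> (s i == k :> nat) = (i == (s^-1)%g j).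
  by move=> <-; rewrite val_eqE; apply/eqP/eqP => [<-|->]; rewrite ?permK ?permKV.
have ne_pq : val p != val q.
  rewrite val_eqE (can_eq (permKV s)).
  by apply/eqP => /(congr1 (@nat_of_ord _)); rewrite inordK.
have -> : \prod_(i < n.+2) pinned x y c 0 1 (s i) =
          \prod_(0 <= i < n.+2) pinned x y c p q i.
  rewrite big_mkord; apply: eq_bigr => i _.
  by rewrite /pinned (perm_at i ord0) // (perm_at i (inord 1)) ?inordK.
rewrite /keeps_order -/p -/q.
case: ltngtP => [lt_pq|lt_qp|/eqP]; last by rewrite (negbTE ne_pq).
- by rewrite prod_pinned ?lt_pq ?ltn_ord // !subSS subn0.
- rewrite (eq_bigr _ (fun i _ => pinned_swap x y c ne_pq i)).
  by rewrite prod_pinned ?lt_qp ?ltn_ord // !subSS subn0.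
Qed.

Lemma linear_pinned (phi : {linear A -> A}) c x y k p q :
  phi 1 = c%:A ->
  forall i, phi (pinned x y k p q i) = pinned (phi x) (phi y) (k * c) p q i.
Proof.
move=> phi1 i; rewrite /pinned.
by case: (i == p); case: (i == q); rewrite // linearZZ phi1 scalerA.
Qed.

End PinnedProducts.

Lemma eq_mlin_eval (F : fieldType) (A : algType F) d (lam : 'S_d -> F) (u v : 'I_d -> A) :
  u =1 v -> mlin_eval lam u = mlin_eval lam v.
Proof.
by move=> uv; apply: eq_bigr => s _; congr (_ *: _); apply: eq_bigr => i _.
Qed.

Lemma mlin_eval_pinned (F : fieldType) (A : algType F) n (lam : 'S_n.+2 -> F)
    (x y : A) (c : F) :
  mlin_eval lam (fun i => pinned x y c 0 1 i) =
  c ^+ n *: ((\sum_(s | keeps_order s) lam s) *: (x * y) +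
             (\sum_(s | ~~ keeps_order s) lam s) *: (y * x)).
Proof.
rewrite /mlin_eval (bigID (@keeps_order n)) /= scalerDr !scaler_suml !scaler_sumr.
by congr (_ + _); apply: eq_bigr => s;
  rewrite prod_perm_pinned; case: keeps_order => // _; rewrite !scalerA mulrC.
Qed.

(* degree d >= 2 is written n.+2; indices 0,1 stand for 1,2 of the paper *)
Theorem lemma3p4 (F : fieldType) (A : algType F) (n : nat)
  (lam : 'S_n.+2 -> F)
  (hsum : \sum_(s : 'S_n.+2) lam s = 0)
  (hsum12 : \sum_(s : 'S_n.+2 | ((s^-1)%g (ord0 : 'I_n.+2) < (s^-1)%g (inord 1 : 'I_n.+2))%N) lam s != 0)
  (phi : {linear A -> A})
  (hphi : preserves_zeros lam phi)
  (h1 : exists2 c : F, c != 0 & phi 1 = c%:A)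
  (a b : A) (hab : a * b = 0) (hba : b * a = 0) :
  phi a * phi b = phi b * phi a.
Proof.
case: h1 => c c0 phi1.
have alpha0 : \sum_(s | keeps_order s) lam s != 0 by [].
have beta_alpha : \sum_(s | ~~ keeps_order s) lam s = - \sum_(s | keeps_order s) lam s.
  by apply/eqP; rewrite -addr_eq0 addrC; move: hsum; rewrite (bigID (@keeps_order n)) => ->.
have f_ab : mlin_eval lam (fun i => pinned a b 1 0 1 i) = 0.
  by rewrite mlin_eval_pinned hab hba !scaler0 addr0 scaler0.
have := hphi _ f_ab.
rewrite (eq_mlin_eval lam (linear_pinned a b 1 0 1 phi1)) mlin_eval_pinned mul1r.
rewrite beta_alpha scaleNr -scalerBr => /eqP.
by rewrite !scaler_eq0 expf_eq0 (negbTE c0) andbF (negbTE alpha0) subr_eq0 => /eqP.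
Qed.
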